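(* Let $N\ge3$ and let $\varphi_1',\dots,\varphi_{N-1}'\in\mathbb R$ with $\sum_{j=1}^{N-1}\varphi_j'\equiv\pi/2\pmod{2\pi}$. Take $X_j=\sigma_x$, $X_j'=\cos\varphi_j'\sigma_x+\sin\varphi_j'\sigma_y$ for $j=1,\dots,N-1$, and $X_N=(\sigma_x-\sigma_y)/\sqrt2$, $X_N'=(\sigma_x+\sigma_y)/\sqrt2$; let $I^N_{CHSH}=\sum_{a,b\in\{0,1\}}(-1)^{ab}\mathbb A_a\otimes\mathbb B_b$. Then for every subset $K\subseteq\{1,\dots,N-1\}$ satisfying $\sum_{k\in K}\varphi_k'\equiv0\pmod\pi$, the state $\bigotimes_{k\in K}\sigma_x^{(k)}|G\rangle$ is an eigenvector of $I^N_{CHSH}$ with eigenvalue $2\sqrt2$ (in particular, for $K=\emptyset$, $I^N_{CHSH}|G\rangle=2\sqrt2|G\rangle$). Moreover, for no subset $K$ do both $K$ and its complement $\{1,\dots,N-1\}\setminus K$ satisfy this condition, so at most $2^{N-2}$ subsets $K$ satisfy it.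
   Context: $|G\rangle=\frac{1}{\sqrt2}(|0\cdots0\rangle+|1\cdots1\rangle)$ is the $N$-qubit GHZ state; $\sigma_x,\sigma_y,\sigma_z$ are Pauli matrices and $\sigma_x^{(k)}$ denotes $\sigma_x$ acting on the $k$-th qubit. $\mathbb A_0=\bigotimes_{j=1}^{N-1}X_j$, $\mathbb A_1=\bigotimes_{j=1}^{N-1}X_j'$ act on qubits $1,\dots,N-1$, and $\mathbb B_0=X_N$, $\mathbb B_1=X_N'$ act on qubit $N$. *)

From HB Require Import structures.
From mathcomp Require Import all_boot all_order all_algebra.
From mathcomp Require Import all_classical all_reals all_analysis.
From mathcomp Require Import complex.
Set Implicit Arguments. Unset Strict Implicit. Unset Printing Implicit Defensive.
Import Order.TTheory GRing.Theory Num.Theory.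
Local Open Scope ring_scope.

Section Defs.
Variable R : realType.

Definition cplx (x y : R) : R[i] := Complex x y.

Definition sigma_x : 'M[R[i]]_2 :=
  \matrix_(i < 2, j < 2) (if i == j then 0 else 1).
Definition sigma_y : 'M[R[i]]_2 :=
  \matrix_(i < 2, j < 2)
    (if i == j then 0 else if (val i == 0)%N then cplx 0 (-1) else cplx 0 1).
Definition sigma_z : 'M[R[i]]_2 :=
  \matrix_(i < 2, j < 2) (if i == j then (if (val i == 0)%N then 1 else -1) else 0).

Definition Xrot (phi : R) : 'M[R[i]]_2 :=
  cplx (cos phi) 0 *: sigma_x + cplx (sin phi) 0 *: sigma_y.

Definition invsqrt2 : R[i] := cplx (Num.sqrt 2)^-1 0.
Definition XN : 'M[R[i]]_2 := invsqrt2 *: (sigma_x - sigma_y).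
Definition XN' : 'M[R[i]]_2 := invsqrt2 *: (sigma_x + sigma_y).

Definition basis (N : nat) := {ffun 'I_N -> 'I_2}.
Definition state (N : nat) := basis N -> R[i].

(* tensor product of single-qubit operators M 0 (x) ... (x) M (N-1) acting on a state *)
Definition tensor_op (N : nat) (M : 'I_N -> 'M[R[i]]_2) (psi : state N) : state N :=
  fun x => \sum_(y : basis N) (\prod_(j < N) M j (x j) (y j)) * psi y.

Definition GHZ (N : nat) : state N :=
  fun x => if [forall i, x i == 0 :> 'I_2] || [forall i, x i == 1 :> 'I_2]
           then invsqrt2 else 0.

(* Qubits are indexed 0..N-1 (paper's qubit k is index k-1); qubit index N-1
   is the last qubit N.  phi' : 'I_(N.-1) -> R gives the angles of qubits 1..N-1. *)
Definition local_obs (N : nat) (phi' : 'I_N.-1 -> R) (a b : bool) (i : 'I_N)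
  : 'M[R[i]]_2 :=
  match (insub (nat_of_ord i) : option 'I_N.-1) with
  | Some j => if a then Xrot (phi' j) else sigma_x   (* A_0 = X_j, A_1 = X_j' *)
  | None => if b then XN' else XN                    (* B_0 = X_N, B_1 = X_N' *)
  end.

Definition I_CHSH (N : nat) (phi' : 'I_N.-1 -> R) (psi : state N) : state N :=
  fun x => \sum_(a : bool) \sum_(b : bool)
     (if a && b then -1 else 1) * tensor_op (local_obs phi' a b) psi x.

Definition emb (N : nat) (k : 'I_N.-1) : 'I_N := widen_ord (leq_pred N) k.

Definition flipped_GHZ (N : nat) (K : {set 'I_N.-1}) : state N :=
  tensor_op (fun i : 'I_N => if i \in [set emb k | k in K] then sigma_x else 1%:M)
            (@GHZ N).

Definition good_subset (N : nat) (phi' : 'I_N.-1 -> R) (K : {set 'I_N.-1}) : Prop :=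
  exists m : int, \sum_(k in K) phi' k = m%:~R * pi.

End Defs.

From HB Require Import structures.
From mathcomp Require Import all_boot all_order all_algebra.
From mathcomp Require Import all_classical all_reals all_analysis.
From mathcomp Require Import complex.
From mathcomp Require Import zify ring.
Set Implicit Arguments. Unset Strict Implicit. Unset Printing Implicit Defensive.
Import Order.TTheory GRing.Theory Num.Theory.
Local Open Scope ring_scope.

(* Every local observable is off-diagonal in the computational basis, so each
   term of I_CHSH sends the basis state x to its complete bit flip, under which
   a flipped GHZ state is invariant: I_CHSH acts diagonally on it.  On its
   support x_j = c + [j in K] (mod 2), the sigma_x factors contribute 1 and the
   rotated ones the phase e^{+-iD}, D = sum_K phi' - sum_{K^c} phi'.  The two
   angle conditions force D = -pi/2 (mod 2 pi), so the phase is -+i, and with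
   the entries (1 +- i)/sqrt 2 of X_N, X_N' the eigenvalue is 2 sqrt 2.
   If K and its complement were both good, sum phi' would be a multiple of pi,
   which pi/2 (mod 2 pi) is not; so the good subsets contain no complementary
   pair and are at most half of the 2^(N-1) subsets. *)

Definition flip (u : 'I_2) : 'I_2 := if u == 0 then 1 else 0.

Lemma ord2P (u : 'I_2) : u = 0 \/ u = 1.
Proof. by case: u => [[|[|//]]] Hu; [left|right]; apply/val_inj. Qed.

Lemma flipK : involutive flip.
Proof. by move=> u; case: (ord2P u) => ->. Qed.

Lemma neq_flipE (u v : 'I_2) : v != flip u -> v = u.
Proof. by case: (ord2P u) => ->; case: (ord2P v) => ->. Qed.

Lemma sum_setC_split (R : zmodType) (T : finType) (F : T -> R) (K : {set T}) :
  \sum_j F j = \sum_(j in K) F j + \sum_(j in ~: K) F j.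
Proof.
by rewrite (bigID (mem K)) /=; congr (_ + _); apply: eq_bigl => j; rewrite inE.
Qed.

Lemma periodicz (U V : zmodType) (f : U -> V) (p : U) :
  periodic f p -> forall (z : int) x, f (x + p *~ z) = f x.
Proof.
move=> fp [k|k] x; first exact: periodicn.
by rewrite -[in RHS](subrK (p *+ k.+1) x) periodicn.
Qed.

Lemma pihalf_neq_intmul_pi (R : realType) (z : int) : pi / 2 != z%:~R * pi :> R.
Proof.
apply/eqP => e; have pi_neq0 : pi != 0 :> R by rewrite gt_eqF // pi_gt0.
have /eqP : (z * 2)%:~R = 1%:~R :> R.
  by apply: (mulIf pi_neq0); rewrite rmorphM /= mulrAC -e mul1r divfK ?pnatr_eq0.
by rewrite eqr_int => /eqP; lia.
Qed.

Lemma card_setC_free (T : finType) (S : {set {set T}}) :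
  S :&: [set ~: K | K in S] = finset.set0 -> (2 * #|S| <= 2 ^ #|T|)%N.
Proof.
move=> disj; have card_imC : #|[set ~: K | K in S]| = #|S|.
  by rewrite card_imset //; exact: finset.setC_inj.
rewrite mul2n -addnn -{2}card_imC -cardsUI disj cards0 addn0.
by rewrite -cardsT -card_powerset; apply/subset_leq_card/fintype.subsetP => K;
  rewrite powersetE => _; exact: finset.subsetT.
Qed.

Section FlippedGHZ.
Variable R : realType.

Lemma tensor_op_monomial N (M : 'I_N -> 'M[R[i]]_2) (f : 'I_N -> 'I_2 -> 'I_2)
    psi x :
  (forall j u v, v != f j u -> M j u v = 0) ->
  tensor_op M psi x = (\prod_j M j (x j) (f j (x j))) * psi [ffun j => f j (x j)].
Proof.
move=> Moff; rewrite /tensor_op (bigD1 [ffun j => f j (x j)]) //=.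
rewrite [X in _ + X]big1 ?addr0 => [|y /eqP y_neq].
  by congr (_ * _); apply: eq_bigr => j _; rewrite ffunE.
have [j /negP yj|yf] := pickP (fun j => (y : {ffun 'I_N -> 'I_2}) j != f j (x j)).
  by rewrite (bigD1 j) //= Moff ?mul0r //; exact/negP.
by case: y_neq; apply/ffunP => j; rewrite ffunE; apply/eqP/negbFE/yf.
Qed.

Lemma GHZ_flip N (y : {ffun 'I_N -> 'I_2}) : GHZ R [ffun j => flip (y j)] = GHZ R y.
Proof.
rewrite /GHZ orbC; congr (if _ then _ else _); congr orb;
  by apply: eq_forallb => j; rewrite ffunE; case: (ord2P (y j)) => ->.
Qed.

Definition expi (t : R) : R[i] := Complex (cos t) (sin t).

Lemma expiD a b : expi (a + b) = expi a * expi b.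
Proof. by rewrite /expi cosD sinD; apply/eqP; rewrite eq_complex /= !eqxx /= addrC. Qed.

Lemma expi_sum I (r : seq I) (P : pred I) (F : I -> R) :
  expi (\sum_(i <- r | P i) F i) = \prod_(i <- r | P i) expi (F i).
Proof. by apply: (big_morph expi expiD); rewrite /expi cos0 sin0. Qed.

Lemma Xrot_flip t u : Xrot t u (flip u) = expi (if u == 0 then - t else t).
Proof.
rewrite /Xrot /expi !mxE; case: (ord2P u) => -> /=; rewrite ?cosN ?sinN;
  by apply/eqP; rewrite eq_complex /=; apply/andP; split; apply/eqP; ring.
Qed.

Lemma sigma_x_flip u : sigma_x R u (flip u) = 1.
Proof. by rewrite mxE; case: (ord2P u) => ->. Qed.

Lemma local_obs_offdiag N (phi' : 'I_N.-1 -> R) a b j u v :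
  v != flip u -> local_obs phi' a b j u v = 0.
Proof.
move=> /neq_flipE ->; rewrite /local_obs.
by case: insub => [k|]; case: a; case: b;
  rewrite /Xrot /XN /XN' !mxE eqxx ?mulr0 ?addr0 ?subr0 ?mulr0.
Qed.

Lemma invsqrt2_neq0 : invsqrt2 R != 0.
Proof.
rewrite /invsqrt2 /cplx eq_complex /= negb_and eqxx orbF invr_eq0 sqrtr_eq0.
by rewrite -ltNge.
Qed.

Definition qubits_of N (K : {set 'I_N.-1}) : {set 'I_N} := [set emb k | k in K].

Lemma flipped_GHZE N (K : {set 'I_N.-1}) x :
  flipped_GHZ R K x =
  GHZ R [ffun j => if j \in qubits_of K then flip (x j) else x j].
Proof.
rewrite /flipped_GHZ (@tensor_op_monomial N _
  (fun j u => if j \in qubits_of K then flip u else u)) => [|j u v].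
  by rewrite big1 ?mul1r // => j _; case: ifP => _; rewrite ?sigma_x_flip ?mxE ?eqxx.
case: ifP => _ v_neq; first by rewrite mxE (neq_flipE v_neq) eqxx.
by rewrite mxE eq_sym (negbTE v_neq).
Qed.

Lemma flipped_GHZ_flip N (K : {set 'I_N.-1}) (x : {ffun 'I_N -> 'I_2}) :
  flipped_GHZ R K [ffun j => flip (x j)] = flipped_GHZ R K x.
Proof.
rewrite !flipped_GHZE -[in RHS]GHZ_flip; congr GHZ; apply/ffunP => j.
by rewrite !ffunE; case: ifP.
Qed.

Lemma flipped_GHZ_neq0 N (K : {set 'I_N.-1}) : exists x, flipped_GHZ R K x != 0.
Proof.
exists [ffun j => if j \in qubits_of K then 1 else 0].
rewrite flipped_GHZE /GHZ; case: ifP => [_|]; first exact: invsqrt2_neq0.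
move/negbT; rewrite negb_or => /andP[/forallP[] j]; rewrite !ffunE.
by case: (j \in _).
Qed.

Lemma flipped_GHZ_support N (K : {set 'I_N.-1}) x :
  flipped_GHZ R K x != 0 ->
  exists c, forall j, x j = if j \in qubits_of K then flip c else c.
Proof.
rewrite flipped_GHZE /GHZ; case: ifP => [|_]; last by rewrite eqxx.
move=> /orP[] /forallP x_const _; [exists 0 | exists 1] => j;
  by move/eqP: (x_const j); rewrite ffunE; case: (j \in _) => // <-; rewrite flipK.
Qed.

Lemma I_CHSH_flipped_GHZ N (phi' : 'I_N.-1 -> R) (K : {set 'I_N.-1}) x :
  I_CHSH phi' (flipped_GHZ R K) x =
  (\sum_(a : bool) \sum_(b : bool) (if a && b then -1 else 1) *
     \prod_j local_obs phi' a b j (x j) (flip (x j))) * flipped_GHZ R K x.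
Proof.
rewrite /I_CHSH mulr_suml; apply: eq_bigr => a _; rewrite mulr_suml.
apply: eq_bigr => b _; rewrite (@tensor_op_monomial _ _ (fun _ => flip)).
  by rewrite flipped_GHZ_flip mulrA.
by move=> j u v; exact: local_obs_offdiag.
Qed.

Lemma mem_qubits_of n (K : {set 'I_n.+1.-1}) (j : 'I_n) :
  (widen_ord (leqnSn n) j \in qubits_of K) = (j \in K).
Proof.
apply/imsetP/idP => [[k kK /(congr1 val) /= jk]|jK].
  by have -> : j = k by apply/val_inj.
by exists j => //; apply/val_inj.
Qed.

Lemma ord_max_notin_qubits_of n (K : {set 'I_n.+1.-1}) :
  (ord_max : 'I_n.+1) \notin qubits_of K.
Proof.
by apply/imsetP => [[k _ /(congr1 val) /= e]]; move: (ltn_ord k); rewrite -e ltnn.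
Qed.

Lemma prod_local_obs n (phi' : 'I_n.+1.-1 -> R) a b (f : 'I_n.+1 -> 'I_2) :
  \prod_j local_obs phi' a b j (f j) (flip (f j)) =
  (\prod_(j < n) (if a then Xrot (phi' j) else sigma_x R)
      (f (widen_ord (leqnSn n) j)) (flip (f (widen_ord (leqnSn n) j)))) *
  (if b then XN' R else XN R) (f ord_max) (flip (f ord_max)).
Proof.
rewrite big_ord_recr /= /local_obs insubN ?ltnn //; congr (_ * _).
by apply: eq_bigr => j _; rewrite /= valK.
Qed.

Definition angle_twist n (phi' : 'I_n -> R) (K : {set 'I_n}) : R :=
  \sum_(j in K) phi' j - \sum_(j in ~: K) phi' j.

Lemma prod_Xrot_flip n (phi' : 'I_n -> R) (K : {set 'I_n}) (c : 'I_2) :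
  \prod_(j < n) Xrot (phi' j) (if j \in K then flip c else c)
                              (flip (if j \in K then flip c else c)) =
  expi (if c == 0 then angle_twist phi' K else - angle_twist phi' K).
Proof.
under eq_bigr => j _ do rewrite Xrot_flip.
rewrite -expi_sum /angle_twist (sum_setC_split _ K); congr expi.
rewrite (eq_bigr (fun j => if flip c == 0 then - phi' j else phi' j)) => [|j -> //].
rewrite [X in _ + X](eq_bigr (fun j => if c == 0 then - phi' j else phi' j));
  last by move=> j; rewrite inE => /negbTE ->.
by case: (ord2P c) => -> /=; rewrite sumrN // opprB addrC.
Qed.

Lemma angle_twist_good n (phi' : 'I_n -> R) (K : {set 'I_n}) (m k : int) :
  \sum_j phi' j = pi / 2 + m%:~R * (2 * pi) ->
  \sum_(j in K) phi' j = k%:~R * pi ->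
  angle_twist phi' K = - (pi / 2) + pi *+ 2 *~ (k - m).
Proof.
rewrite /angle_twist (sum_setC_split _ K) => + sumK; rewrite sumK => total.
have -> : \sum_(j in ~: K) phi' j = pi / 2 + m%:~R * (2 * pi) - k%:~R * pi.
  by rewrite -total addrAC subrr add0r.
by rewrite -[pi *+ 2 *~ _]mulrzl rmorphB /= -mulr_natl; ring.
Qed.

Lemma expi_quarter_turn (z : int) (c : 'I_2) :
  let t := - (pi / 2) + pi *+ 2 *~ z in
  expi (if c == 0 then t else - t) = cplx 0 (if c == 0 then -1 else 1).
Proof.
have [cos_t sin_t] : cos (- (pi / 2) + pi *+ 2 *~ z) = 0 :> R /\
                     sin (- (pi / 2) + pi *+ 2 *~ z) = -1 :> R.
  by rewrite !periodicz ?cosN ?sinN ?cos_pihalf ?sin_pihalf //;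
    [exact: sinD2pi | exact: cosD2pi].
by case: (ord2P c) => -> /=; rewrite /expi ?cosN ?sinN cos_t sin_t ?oppr0 ?opprK.
Qed.

Lemma CHSH_XN_entries (c : 'I_2) (e : R[i]) :
  e = cplx 0 (if c == 0 then -1 else 1) ->
  (1 + e) * XN R c (flip c) + (1 - e) * XN' R c (flip c) = cplx (2 * Num.sqrt 2) 0.
Proof.
have sqrt2_neq0 : Num.sqrt 2 != 0 :> R by rewrite sqrtr_eq0 -ltNge.
have inv_sqrt2 : (Num.sqrt 2)^-1 = Num.sqrt 2 / 2 :> R.
  by apply: (mulfI sqrt2_neq0); rewrite divff // mulrA -expr2 sqr_sqrtr ?divff.
move=> ->; case: (ord2P c) => -> /=; rewrite /XN /XN' /invsqrt2 /cplx !mxE /=;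
  by apply/eqP; rewrite eq_complex /= inv_sqrt2; apply/andP; split; apply/eqP; field.
Qed.

Lemma flipped_GHZ_CHSH_eigen n (phi' : 'I_n.+1.-1 -> R) (K : {set 'I_n.+1.-1})
    (m k : int) :
  \sum_j phi' j = pi / 2 + m%:~R * (2 * pi) ->
  \sum_(j in K) phi' j = k%:~R * pi ->
  forall x, I_CHSH phi' (flipped_GHZ R K) x
            = cplx (2 * Num.sqrt 2) 0 * flipped_GHZ R K x.
Proof.
move=> total sumK x; rewrite I_CHSH_flipped_GHZ.
have [->|/flipped_GHZ_support[c x_supp]] := eqVneq (flipped_GHZ R K x) 0.
  by rewrite !mulr0.
congr (_ * _); rewrite !big_bool /= !prod_local_obs.
under [\prod_(j < n) Xrot _ _ _]eq_bigr => j _ do rewrite x_supp mem_qubits_of.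
rewrite prod_Xrot_flip (angle_twist_good total sumK) expi_quarter_turn.
rewrite big1 => [|j _]; last exact: sigma_x_flip.
rewrite x_supp (negbTE (ord_max_notin_qubits_of K)) -(CHSH_XN_entries (c := c) erefl).
ring.
Qed.

End FlippedGHZ.

Lemma not_good_subset_and_setC (R : realType) N (phi' : 'I_N.-1 -> R)
    (K : {set 'I_N.-1}) (m : int) :
  \sum_j phi' j = pi / 2 + m%:~R * (2 * pi) ->
  ~ (good_subset phi' K /\ good_subset phi' (~: K)).
Proof.
move=> total [[k sumK] [k' sumCK]]; apply/negP: (pihalf_neq_intmul_pi R (k + k' - m * 2)).
apply/negPn/eqP; rewrite -[pi / 2](addrK (m%:~R * (2 * pi))) -total.
by rewrite (sum_setC_split _ K) sumK sumCK !rmorphB !rmorphD /= rmorphM /=; ring.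
Qed.

Theorem mainTheorem5 (R : realType) (N : nat) (phi' : 'I_N.-1 -> R) :
  (3 <= N)%N ->
  (exists m : int, \sum_(j < N.-1) phi' j = pi / 2 + m%:~R * (2 * pi)) ->
  (forall K : {set 'I_N.-1}, good_subset phi' K ->
     (exists x, flipped_GHZ R K x != 0) /\
     (forall x, I_CHSH phi' (flipped_GHZ R K) x
                = cplx (2 * Num.sqrt 2) 0 * flipped_GHZ R K x)) /\
  (forall K : {set 'I_N.-1}, ~ (good_subset phi' K /\ good_subset phi' (~: K))) /\
  (forall S : {set {set 'I_N.-1}},
     (forall K, K \in S -> good_subset phi' K) -> (#|S| <= 2 ^ (N - 2))%N).
Proof.
case: N phi' => [|[|[|n]]] phi' // _ [m total].
have not_both K : ~ (good_subset phi' K /\ good_subset phi' (~: K)).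
  exact: not_good_subset_and_setC total.
split=> [K [k sumK]|].
  by split; [exact: flipped_GHZ_neq0 | exact: flipped_GHZ_CHSH_eigen total sumK].
split=> // S S_good.
have disj : S :&: [set ~: K | K in S] = finset.set0.
  apply/setP => K; rewrite !inE; apply/negbTE/andP => -[K_S /imsetP[K' K'_S K_eq]].
  by apply: (not_both K'); split; [exact: S_good | rewrite -K_eq; exact: S_good].
have := card_setC_free disj.
rewrite card_ord -[(n.+3 - 2)%N]/n.+1 -[n.+3.-1]/n.+2.
by rewrite [(2 ^ n.+2)%N]expnS leq_pmul2l.
Qed.
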